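(* Let $\mathcal H_A,\mathcal H_B$ be Hilbert spaces of dimension $N$, let $\rho_{AB}$ be a density operator on $\mathcal H_A\otimes\mathcal H_B$, and let $X$ be a projective measurement on $A$ given by an orthonormal basis $\{|x_i\rangle\}_{i=1}^N$ of $\mathcal H_A$. For every projective measurement $X'$ on $B$, given by an orthonormal basis $\{|x'_\mu\rangle\}_{\mu=1}^N$ of $\mathcal H_B$, let $\vec p(x|x')\in\mathbb R^N$ be the majorized marginal distribution defined in the context. Then there exists a unique least upper bound $\vec s^{\,(x)}$, with respect to the majorization order, of the set $\{\vec p(x|x') : X'\}$; in particular $\vec p(x|x')\prec \vec s^{\,(x)}$ for all $X'$. Moreover $\vec s^{\,(x)}$ depends only on $X$ and $\rho_{AB}$ and is given by $$\vec s^{\,(x)}=\vec p(x|x'^{(1)})\vee \vec p(x|x'^{(2)})\vee\cdots\vee \vec p(x|x'^{(N)}),$$ where for each $k\in\{1,\dots,N\}$, $X'^{(k)}$ is a measurement on $B$ for which $\sum_{i=1}^k p_i(x|x'^{(k)})=\max_{X'}\sum_{i=1}^k p_i(x|x')$ (components listed in descending order).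
   Context: Joint distribution: $P_{i\mu}(X,X')=\langle x_i|\otimes\langle x'_\mu|\,\rho_{AB}\,|x_i\rangle\otimes|x'_\mu\rangle$. For each $\mu$, let $\vec p^{\,(\mu)}(x)=(P_{1\mu},\dots,P_{N\mu})$ and let $\vec p^{\,(\mu)\downarrow}(x)$ denote this vector with components rearranged in descending order. The majorized marginal distribution is $\vec p(x|x')=\sum_{\mu=1}^N \vec p^{\,(\mu)\downarrow}(x)$ (a probability vector with components in descending order). Majorization: for $\vec a,\vec b\in\mathbb R^N$ with components sorted in descending order, $\vec a\prec\vec b$ means $\sum_{i=1}^k a_i\le\sum_{i=1}^k b_i$ for all $k=1,\dots,N$, with equality for $k=N$. On the set of descending-ordered probability vectors, $\prec$ is a lattice order, and $\vec a\vee\vec b$ denotes the join (least upper bound) of $\vec a$ and $\vec b$ in this majorization lattice. *)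

From HB Require Import structures.
From mathcomp Require Import all_boot all_order all_algebra.
From mathcomp Require Import reals.
From mathcomp Require Import complex mxtens.
From Stdlib Require Import ClassicalEpsilon.

Set Implicit Arguments.
Unset Strict Implicit.
Unset Printing Implicit Defensive.

Import Order.TTheory GRing.Theory Num.Theory.
Local Open Scope ring_scope.

Section Defs.
Variable R : realType.
Local Notation C := R[i].

Definition adjmx m n (A : 'M[C]_(m, n)) : 'M[C]_(n, m) := (map_mx Num.conj A)^T.

Definition unitary_mx N (U : 'M[C]_N) : Prop := adjmx U *m U = 1%:M.

Definition density_op M (rho : 'M[C]_M) : Prop :=
  [/\ adjmx rho = rho,
      (forall v : 'cV[C]_M, 0 <= (adjmx v *m rho *m v) 0 0)
    & \tr rho = 1].

(* joint distribution P_{i mu} = <x_i| (x) <x'_mu| rho |x_i> (x) |x'_mu>,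
   where |x_i> = i-th column of U and |x'_mu> = mu-th column of V *)
Definition joint_prob N (rho : 'M[C]_(N * N)) (U V : 'M[C]_N) (i mu : 'I_N) : R :=
  let w : 'cV[C]_(N * N) := col i U *t col mu V in
  complex.Re ((adjmx w *m rho *m w) 0 0).

Definition desc_sort N (v : 'rV[R]_N) : 'rV[R]_N :=
  \row_(i < N) nth 0 (sort (fun x y => y <= x) [seq v 0 j | j <- enum 'I_N]) i.

Definition maj_marginal N (rho : 'M[C]_(N * N)) (U V : 'M[C]_N) : 'rV[R]_N :=
  \sum_(mu < N) desc_sort (\row_(i < N) joint_prob rho U V i mu).

Definition psum N (a : 'rV[R]_N) (k : nat) : R := \sum_(i < N | (i < k)%N) a 0 i.

(* descending-ordered probability vectors: the carrier of the majorization lattice *)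
Definition desc_prob N (a : 'rV[R]_N) : Prop :=
  [/\ forall i j : 'I_N, (i <= j)%N -> a 0 j <= a 0 i,
      forall i, 0 <= a 0 i
    & \sum_(i < N) a 0 i = 1].

Definition majorized N (a b : 'rV[R]_N) : Prop :=
  (forall k, (k <= N)%N -> psum a k <= psum b k) /\ psum a N = psum b N.

Definition maj_lub N (S : 'rV[R]_N -> Prop) (s : 'rV[R]_N) : Prop :=
  [/\ desc_prob s,
      (forall a, S a -> majorized a s)
    & forall t, desc_prob t -> (forall a, S a -> majorized a t) -> majorized s t].

Definition maj_join N (a b : 'rV[R]_N) : 'rV[R]_N :=
  epsilon (inhabits 0) (maj_lub (fun c => c = a \/ c = b)).

End Defs.

From mathcomp Require Import all_boot all_order all_algebra all_fingroup.
From mathcomp Require Import reals complex mxtens.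
From mathcomp Require Import classical_sets boolp topology normedtype derive.
From mathcomp Require Import lra.
From Stdlib Require Import ClassicalEpsilon.

(* The partial sums of a descending probability vector form a concave sequence
   from 0 to 1, and majorization compares these sequences pointwise. Hence every
   family of probability vectors has a least upper bound: the vector whose partial
   sums are the pointwise infima of those of its descending upper bounds, since an
   infimum of concave sequences is concave.
   For the majorized marginals p(x|x'), the sum of the k largest entries is the
   maximum, over choices of one permutation of the outcomes of X per outcome of X',
   of a continuous function of the unitary matrix describing X'; by compactness of
   the unitary group it is maximized by some X'^(k). An upper bound of the N vectors
   p(x|x'^(k)) then dominates every p(x|x') in every partial sum, so the least upper
   bound of the whole family is the iterated join of these N vectors. *)

Set Implicit Arguments.
Unset Strict Implicit.
Unset Printing Implicit Defensive.

Import Order.TTheory GRing.Theory Num.Theory numFieldNormedType.Exports.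
Local Open Scope ring_scope.

Section PartialSums.
Variables (R : realType) (N : nat).
Implicit Types a s : 'rV[R]_N.

Lemma desc_sort_perm a : exists p : 'S_N, forall j, desc_sort a 0 j = a 0 (p j).
Proof.
set l := [seq a 0 j | j <- enum 'I_N].
have size_l : size l == N by rewrite size_map size_enum_ord.
have : perm_eq (sort (fun x y : R => y <= x) l) (Tuple size_l) by rewrite perm_sort.
case/tuple_permP => p Hp; exists p => j.
rewrite /desc_sort mxE Hp (nth_map j) ?size_enum_ord // nth_ord_enum (tnth_nth 0) /=.
by rewrite /l (nth_map j) ?size_enum_ord // nth_ord_enum.
Qed.

Lemma desc_sort_desc a (i j : 'I_N) : (i <= j)%N -> desc_sort a 0 j <= desc_sort a 0 i.
Proof.
move=> le_ij; rewrite /desc_sort !mxE.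
set l := [seq a 0 j | j <- enum 'I_N].
have sorted_l : sorted (fun x y : R => y <= x) (sort (fun x y : R => y <= x) l).
  by apply: sort_sorted => x y; apply: le_total.
have size_l : size (sort (fun x y : R => y <= x) l) = N.
  by rewrite size_sort size_map size_enum_ord.
have ge_trans : transitive (fun x y : R => y <= x).
  by move=> x y z /= h1 h2; apply: le_trans h2 h1.
by apply: (sorted_leq_nth ge_trans _ 0 sorted_l); rewrite ?inE ?size_l.
Qed.

Lemma psum0 a : psum a 0 = 0.
Proof. by rewrite /psum big_pred0. Qed.

Lemma psumS a k (lt_kN : (k < N)%N) : psum a k.+1 = psum a k + a 0 (Ordinal lt_kN).
Proof.
rewrite /psum (bigD1 (Ordinal lt_kN)) //= addrC; congr (_ + _).
by apply: eq_bigl => j; rewrite ltnS -val_eqE /= ltn_neqAle andbC.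
Qed.

Lemma psum_total a k : (N <= k)%N -> psum a k = \sum_i a 0 i.
Proof. by move=> le_Nk; apply: eq_bigl => j; rewrite (leq_trans (ltn_ord j) le_Nk). Qed.

(* With c the (k+1)-th entry of s, every entry x satisfies x <= c + (x - c)^+,
   and the positive parts (x - c)^+ over all entries add up to psum s k.+1 - (k+1) c. *)
Lemma sum_inj_le_psum s (g : 'I_N -> 'I_N) (k : 'I_N) :
  (forall i j : 'I_N, (i <= j)%N -> s 0 j <= s 0 i) -> injective g ->
  \sum_(j < N | (j < k.+1)%N) s 0 (g j) <= psum s k.+1.
Proof.
move=> s_desc g_inj; set c := s 0 k.
pose pos (x : R) := Num.max (x - c) 0.
have pos_ge0 x : 0 <= pos x by rewrite /pos le_max lexx orbT.
have split_c : \sum_(j < N | (j < k.+1)%N) s 0 (g j)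
    <= \sum_(j < N | (j < k.+1)%N) (c + pos (s 0 (g j))).
  by apply: ler_sum => j _; rewrite -lerBlDl /pos le_max lexx.
have pos_img : \sum_(j < N | (j < k.+1)%N) pos (s 0 (g j)) <= \sum_j pos (s 0 j).
  rewrite [X in _ <= X](reindex_inj g_inj) /=.
  rewrite [X in _ <= X](bigID (fun j : 'I_N => (j < k.+1)%N)) /= lerDl.
  by apply: sumr_ge0 => j _; apply: pos_ge0.
have pos_all : \sum_j pos (s 0 j) = \sum_(j < N | (j < k.+1)%N) (s 0 j - c).
  rewrite (bigID (fun j : 'I_N => (j < k.+1)%N)) /= [X in _ + X]big1 ?addr0.
    by apply: eq_bigr => j lt_jk; rewrite /pos max_l // subr_ge0 s_desc // -ltnS.
  move=> j; rewrite ltnS -ltnNge => /ltnW le_kj.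
  by rewrite /pos max_r // subr_le0 s_desc.
apply: (le_trans split_c); rewrite big_split /=.
apply: (le_trans (lerD (lexx _) pos_img)); rewrite pos_all -big_split /=.
by under eq_bigr do rewrite addrC subrK.
Qed.

End PartialSums.

Section Majorization.
Variables (R : realType) (N : nat).
Hypothesis N_gt0 : (0 < N)%N.
Implicit Types a b s t : 'rV[R]_N.

Definition prob_vec a := (forall i, 0 <= a 0 i) /\ \sum_i a 0 i = 1.

Lemma desc_prob_prob a : desc_prob a -> prob_vec a.
Proof. by case. Qed.

Lemma psum_ge0 a k : prob_vec a -> 0 <= psum a k.
Proof. by case=> a_ge0 _; apply: sumr_ge0 => i _; apply: a_ge0. Qed.

Lemma psum_le1 a k : prob_vec a -> psum a k <= 1.
Proof.
case=> a_ge0 <-; rewrite [X in _ <= X](bigID (fun j : 'I_N => (j < k)%N)) /= lerDl.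
by apply: sumr_ge0 => i _; apply: a_ge0.
Qed.

Lemma psumN_prob a : prob_vec a -> psum a N = 1.
Proof. by case=> _ <-; apply: psum_total. Qed.

Lemma majorized_refl a : majorized a a.
Proof. by split. Qed.

Lemma majorized_trans b a c : majorized a b -> majorized b c -> majorized a c.
Proof.
case=> le_ab eq_ab [le_bc eq_bc]; split; last by rewrite eq_ab.
by move=> k le_kN; apply: le_trans (le_ab k le_kN) (le_bc k le_kN).
Qed.

Lemma majorized_anti a b : majorized a b -> majorized b a -> a = b.
Proof.
case=> le_ab _ [le_ba _]; apply/rowP => j.
have eq_psum k : (k <= N)%N -> psum a k = psum b k.
  by move=> le_kN; apply/le_anti; rewrite le_ab // le_ba.
have lt_jN := ltn_ord j.
have := eq_psum j.+1 lt_jN; rewrite !(psumS _ lt_jN) (eq_psum j (ltnW lt_jN)) => /addrI.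
by congr (_ = _); congr (_ _ _); apply: val_inj.
Qed.

Lemma majorized_prob_psumS a t : prob_vec a -> prob_vec t ->
  (forall k, (k < N)%N -> psum a k.+1 <= psum t k.+1) -> majorized a t.
Proof.
move=> pa pt le_at; split; last by rewrite !psumN_prob.
by case=> [|k] lt_kN; [rewrite !psum0 | apply: le_at].
Qed.

Definition maj_top : 'rV[R]_N := \row_(i < N) ((i : nat) == 0%N)%:R.

Lemma desc_prob_top : desc_prob maj_top.
Proof.
split.
- move=> i j; rewrite !mxE; case: (j : nat) => [|j'] /=; last by case: (_ == _).
  by rewrite leqn0 => /eqP ->.
- by move=> i; rewrite mxE; case: (_ == _).
- rewrite (bigD1 (Ordinal N_gt0)) //= mxE eqxx big1 ?addr0 // => j ne_j0.
  by rewrite mxE; case: eqP => // j0; case/eqP: ne_j0; apply: val_inj.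
Qed.

Lemma majorized_top a : prob_vec a -> majorized a maj_top.
Proof.
move=> pa; apply: majorized_prob_psumS => // [|k _].
  exact/desc_prob_prob/desc_prob_top.
apply: le_trans (psum_le1 k.+1 pa) _.
rewrite /psum (bigD1 (Ordinal N_gt0)) //= mxE eqxx lerDl.
by apply: sumr_ge0 => i _; rewrite mxE; case: (_ == _).
Qed.

Lemma maj_lub_ext (S S' : 'rV[R]_N -> Prop) s :
  (forall c, S c <-> S' c) -> maj_lub S s -> maj_lub S' s.
Proof.
move=> eqS [s_dp s_ub s_least]; split => // [a /eqS | t t_dp t_ub]; first exact: s_ub.
by apply: s_least => // a /eqS; apply: t_ub.
Qed.

Lemma maj_lub_unique (S : 'rV[R]_N -> Prop) s s' :
  maj_lub S s -> maj_lub S s' -> s = s'.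
Proof. by case=> s_dp s_ub s_least [s'_dp s'_ub s'_least]; apply: majorized_anti; auto. Qed.

Lemma maj_lub1 a : desc_prob a -> maj_lub (eq^~ a) a.
Proof. by split => // [_ -> | t _]; [apply: majorized_refl | apply]. Qed.

Lemma maj_lub_sub (S S' : 'rV[R]_N -> Prop) s : (forall c, S' c -> S c) ->
  (forall t, desc_prob t -> (forall c, S' c -> majorized c t) ->
     forall a, S a -> majorized a t) ->
  maj_lub S s -> maj_lub S' s.
Proof.
move=> subS dom [s_dp s_ub s_least]; split => // [c /subS | t t_dp t_ub]; first exact: s_ub.
exact/s_least/dom.
Qed.

End Majorization.

Section MajorizationLub.
Variables (R : realType) (N : nat).
Hypothesis N_gt0 : (0 < N)%N.
Implicit Types (a t : 'rV[R]_N) (d : nat -> R).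

Lemma psum_diff d k : d 0%N = 0 -> (k <= N)%N ->
  psum (\row_(i < N) (d i.+1 - d i)) k = d k.
Proof.
move=> d0; elim: k => [|k IH] lt_kN; first by rewrite psum0.
by rewrite (psumS _ lt_kN) IH ?(ltnW lt_kN) // mxE addrC subrK.
Qed.

Lemma desc_prob_diff d : d 0%N = 0 -> d N = 1 -> d N.-1 <= 1 ->
  (forall i, (i.+1 < N)%N -> d i.+2 - d i.+1 <= d i.+1 - d i) ->
  desc_prob (\row_(i < N) (d i.+1 - d i)).
Proof.
move=> d0 dN dN1 d_concave.
have d_desc : forall i j : 'I_N, (i <= j)%N -> d j.+1 - d j <= d i.+1 - d i.
  move=> i j; apply: (Order.NatMonotonyTheory.nonincn_inP
    (f := fun m => d m.+1 - d m) (D := gtn N)); rewrite ?inE //.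
  - by move=> m n _ lt_nN p /andP [_ lt_pn]; apply: ltn_trans lt_pn lt_nN.
  - by move=> m _ lt_m1N; apply: d_concave.
have lt_N1N : (N.-1 < N)%N by rewrite prednK.
split.
- by move=> i j le_ij; rewrite !mxE d_desc.
- move=> i; rewrite mxE; apply: le_trans (d_desc i (Ordinal lt_N1N) _); last first.
    by rewrite /= -ltnS prednK.
  by rewrite /= prednK // dN subr_ge0.
- by rewrite -(psum_total _ (leqnn N)) psum_diff.
Qed.

Variable S : 'rV[R]_N -> Prop.
Hypothesis S_prob : forall a, S a -> prob_vec a.

Let upper t := desc_prob t /\ forall a, S a -> majorized a t.

Let lub_psum k := inf [set psum t k | t in upper].

Let upper_top : upper (maj_top R N).
Proof. by split=> [|a /S_prob]; [apply: desc_prob_top | apply: majorized_top]. Qed.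

Let lub_psum_le t k : upper t -> lub_psum k <= psum t k.
Proof.
move=> upper_t; apply: ge_inf; last by exists t.
by exists 0 => _ [u [/desc_prob_prob pu _] <-]; apply: psum_ge0.
Qed.

Let le_lub_psum x k : (forall t, upper t -> x <= psum t k) -> x <= lub_psum k.
Proof.
move=> lb_x; apply: lb_le_inf; first by exists (psum (maj_top R N) k), (maj_top R N).
by move=> _ [t upper_t <-]; apply: lb_x.
Qed.

Let lub_psum_concave i : (i.+1 < N)%N ->
  lub_psum i.+2 - lub_psum i.+1 <= lub_psum i.+1 - lub_psum i.
Proof.
move=> lt_i1N; have lt_iN := ltnW lt_i1N.
suff : (lub_psum i + lub_psum i.+2) / 2 <= lub_psum i.+1 by lra.
apply: le_lub_psum => t upper_t; have [[t_desc _ _] _] := upper_t.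
have t_step : t 0 (Ordinal lt_i1N) <= t 0 (Ordinal lt_iN) by apply: t_desc => /=.
have := lub_psum_le i upper_t; have := lub_psum_le i.+2 upper_t.
by rewrite (psumS _ lt_i1N) (psumS _ lt_iN); lra.
Qed.

Lemma maj_lub_exists : exists s, maj_lub S s.
Proof.
have top_prob : prob_vec (maj_top R N) by apply/desc_prob_prob/desc_prob_top.
have lub_psum0 : lub_psum 0%N = 0.
  apply/le_anti; rewrite (le_trans (lub_psum_le 0 upper_top)) ?psum0 //=.
  by apply: le_lub_psum => t _; rewrite psum0.
have lub_psumN : lub_psum N = 1.
  apply/le_anti; rewrite (le_trans (lub_psum_le N upper_top)) ?psumN_prob //=.
  by apply: le_lub_psum => t [/desc_prob_prob pt _]; rewrite psumN_prob.
have lub_psum_le1 k : lub_psum k <= 1.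
  exact: le_trans (lub_psum_le k upper_top) (psum_le1 k top_prob).
pose s := \row_(i < N) (lub_psum i.+1 - lub_psum i).
have s_dp : desc_prob s := desc_prob_diff lub_psum0 lub_psumN (lub_psum_le1 _) lub_psum_concave.
have psum_s k : (k <= N)%N -> psum s k = lub_psum k by apply: psum_diff.
exists s; split => // [a Sa | t t_dp t_ub].
- apply: majorized_prob_psumS (S_prob Sa) (desc_prob_prob s_dp) _ => k lt_kN.
  rewrite psum_s //; apply: le_lub_psum => t [_ t_ub].
  by have [le_at _] := t_ub a Sa; apply: le_at.
- apply: majorized_prob_psumS (desc_prob_prob s_dp) (desc_prob_prob t_dp) _ => k lt_kN.
  by rewrite psum_s //; apply: lub_psum_le.
Qed.

End MajorizationLub.

Section MajorizationJoin.
Variables (R : realType) (N : nat).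
Hypothesis N_gt0 : (0 < N)%N.
Implicit Types (a b : 'rV[R]_N) (Q : 'rV[R]_N -> Prop).

Lemma maj_join_lub a b : prob_vec a -> prob_vec b ->
  maj_lub (fun c => c = a \/ c = b) (maj_join a b).
Proof. by move=> pa pb; apply: epsilon_spec; apply: maj_lub_exists => // c [->|->]. Qed.

Lemma maj_lub_join Q acc b : (forall c, Q c -> prob_vec c) -> prob_vec b ->
  maj_lub Q acc -> maj_lub (fun c => Q c \/ c = b) (maj_join acc b).
Proof.
move=> Q_prob pb [acc_dp acc_ub acc_least].
have [j_dp j_ub j_least] := maj_join_lub (desc_prob_prob acc_dp) pb.
split => //.
- move=> c [Qc | ->]; last by apply: j_ub; right.
  by apply: majorized_trans (acc_ub c Qc) _; apply: j_ub; left.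
- move=> t t_dp t_ub; apply: j_least => // x [-> | ->]; last by apply: t_ub; right.
  by apply: acc_least => // c Qc; apply: t_ub; left.
Qed.

Lemma maj_lub_foldl_join Q acc bs : (forall c, Q c -> prob_vec c) ->
  (forall b, b \in bs -> prob_vec b) -> maj_lub Q acc ->
  maj_lub (fun c => Q c \/ c \in bs) (foldl (@maj_join R N) acc bs).
Proof.
elim: bs Q acc => [|b bs IH] Q acc Q_prob bs_prob acc_lub /=.
  by apply: maj_lub_ext acc_lub => c; rewrite in_nil; split; [left | case].
have Qb_prob c : Q c \/ c = b -> prob_vec c.
  by case=> [/Q_prob // | ->]; apply: bs_prob; rewrite mem_head.
have bs'_prob c : c \in bs -> prob_vec c.
  by move=> cbs; apply: bs_prob; rewrite in_cons cbs orbT.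
have := IH _ _ Qb_prob bs'_prob
  (maj_lub_join Q_prob (Qb_prob b (or_intror erefl)) acc_lub).
apply: maj_lub_ext => c; rewrite in_cons; split.
- by case=> [[Qc | ->] | cbs]; [left | rewrite eqxx; right | rewrite cbs orbT; right].
- by case=> [Qc | /orP [/eqP -> | cbs]]; [left; left | left; right | right].
Qed.

Lemma enum_ord_head : enum 'I_N = Ordinal N_gt0 :: behead (enum 'I_N).
Proof.
by case: N N_gt0 => // n n_gt0; rewrite enum_ordSl; congr (_ :: _); apply: val_inj.
Qed.

Lemma maj_lub_foldl_enum (f : 'I_N -> 'rV[R]_N) :
  (forall k, desc_prob (f k)) ->
  maj_lub (fun c => exists k, c = f k)
    (foldl (fun acc k => maj_join acc (f k)) (f (Ordinal N_gt0)) (behead (enum 'I_N))).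
Proof.
move=> f_dp; have f_prob k := desc_prob_prob (f_dp k).
have -> : forall acc (L : seq 'I_N), foldl (fun acc k => maj_join acc (f k)) acc L
    = foldl (@maj_join R N) acc (map f L) by move=> acc L; elim: L acc => //=.
have head_prob c : c = f (Ordinal N_gt0) -> prob_vec c by move->.
have tail_prob c : c \in map f (behead (enum 'I_N)) -> prob_vec c by case/mapP=> k _ ->.
have := maj_lub_foldl_join head_prob tail_prob (maj_lub1 (f_dp _)).
apply: maj_lub_ext => c; split.
- by case=> [-> | /mapP [k _ ->]]; eexists.
- case=> k ->; have : k \in enum 'I_N by rewrite mem_enum.
  by rewrite enum_ord_head in_cons => /orP [/eqP -> | k_in]; [left | right; apply: map_f].
Qed.

End MajorizationJoin.

Section ComplexMatrices.
Variable R : realType.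
Local Notation C := R[i].

Lemma Re_sum (I : Type) (r : seq I) (P : pred I) (F : I -> C) :
  complex.Re (\sum_(i <- r | P i) F i) = \sum_(i <- r | P i) complex.Re (F i).
Proof. exact: (raddf_sum (@complex.Re R : Rcomplex R -> R)). Qed.

Lemma Im_sum (I : Type) (r : seq I) (P : pred I) (F : I -> C) :
  complex.Im (\sum_(i <- r | P i) F i) = \sum_(i <- r | P i) complex.Im (F i).
Proof. exact: (raddf_sum (@complex.Im R : Rcomplex R -> R)). Qed.

Lemma adjmx_tens m n p q (A : 'M[C]_(m, n)) (B : 'M[C]_(p, q)) :
  adjmx (A *t B) = adjmx A *t adjmx B.
Proof. by rewrite /adjmx map_mxT trmx_tens. Qed.

Lemma tensmx11 m n : (1%:M : 'M[C]_m) *t (1%:M : 'M[C]_n) = 1%:M.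
Proof.
apply/matrixP => r c.
case: (mxtens_indexP r) => i j; case: (mxtens_indexP c) => k l.
rewrite tensmxE !mxE.
have -> : (mxtens_index (i, j) == mxtens_index (k, l)) = (i == k) && (j == l).
  apply/eqP/andP => [/(congr1 (@mxtens_unindex m n))|[/eqP -> /eqP ->] //].
  by rewrite !mxtens_indexK => -[-> ->].
by case: (i == k); case: (j == l); rewrite ?mulr1 ?mulr0.
Qed.

Lemma unitary_tens m n (U : 'M[C]_m) (V : 'M[C]_n) :
  unitary_mx U -> unitary_mx V -> unitary_mx (U *t V).
Proof. by move=> hU hV; rewrite /unitary_mx adjmx_tens tensmx_mul hU hV tensmx11. Qed.

Lemma unitary1 n : unitary_mx (1%:M : 'M[C]_n).
Proof. by rewrite /unitary_mx /adjmx map_scalar_mx rmorph1 tr_scalar_mx mulmx1. Qed.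

Lemma col_tens m n (U : 'M[C]_m) (V : 'M[C]_n) i mu :
  col i U *t col mu V = col (mxtens_index (i, mu)) (U *t V).
Proof. by apply/matrixP => r c; rewrite /tensmx !mxE mxtens_indexK. Qed.

Lemma quad_form_col m (W rho : 'M[C]_m) d :
  (adjmx (col d W) *m rho *m col d W) 0 0 = (adjmx W *m rho *m W) d d.
Proof.
rewrite !mxE; apply: eq_bigr => k _; rewrite !mxE; congr (_ * _).
by apply: eq_bigr => l _; rewrite !mxE.
Qed.

End ComplexMatrices.

Section Marginal.
Variables (R : realType) (N : nat).
Variables (rho : 'M[R[i]]_(N * N)) (U : 'M[R[i]]_N).
Hypotheses (rho_dens : density_op rho) (U_unitary : unitary_mx U).

Lemma joint_prob_ge0 V i mu : 0 <= joint_prob rho U V i mu.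
Proof.
have [_ rho_psd _] := rho_dens.
by have := rho_psd (col i U *t col mu V); rewrite lecE => /andP [_].
Qed.

Lemma sum_joint_prob V : unitary_mx V -> \sum_i \sum_mu joint_prob rho U V i mu = 1.
Proof.
move=> V_unitary; have [_ _ tr_rho] := rho_dens.
set W := U *t V.
have W_coisometry : W *m adjmx W = 1%:M by apply/mulmx1C/unitary_tens.
rewrite pair_big /= (reindex (@mxtens_unindex N N)); last first.
  by exists (@mxtens_index N N) => c _; [apply: mxtens_unindexK | apply: mxtens_indexK].
transitivity (complex.Re (\tr (adjmx W *m rho *m W))); last first.
  by rewrite mxtrace_mulC mulmxA W_coisometry mul1mx tr_rho.
rewrite /mxtrace Re_sum; apply: eq_bigr => c _.
by case: (mxtens_indexP c) => i mu; rewrite mxtens_indexK /joint_prob col_tens quad_form_col.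
Qed.

Definition joint_col V mu : 'rV[R]_N := \row_(i < N) joint_prob rho U V i mu.

Lemma maj_marginalE V j :
  maj_marginal rho U V 0 j = \sum_mu desc_sort (joint_col V mu) 0 j.
Proof. by rewrite /maj_marginal summxE. Qed.

Lemma maj_marginal_desc_prob V : unitary_mx V -> desc_prob (maj_marginal rho U V).
Proof.
move=> V_unitary; split.
- move=> i j le_ij; rewrite !maj_marginalE; apply: ler_sum => mu _.
  exact: desc_sort_desc.
- move=> i; rewrite maj_marginalE; apply: sumr_ge0 => mu _.
  by have [p ->] := desc_sort_perm (joint_col V mu); rewrite mxE joint_prob_ge0.
- rewrite -(sum_joint_prob V_unitary) exchange_big /=.
  under eq_bigr do rewrite maj_marginalE.
  rewrite exchange_big /=; apply: eq_bigr => mu _.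
  have [p p_sort] := desc_sort_perm (joint_col V mu).
  under eq_bigr do rewrite p_sort mxE.
  by rewrite [RHS](reindex_inj (@perm_inj _ p)).
Qed.

Lemma psum_maj_marginal V k :
  psum (maj_marginal rho U V) k = \sum_mu psum (desc_sort (joint_col V mu)) k.
Proof. by rewrite /psum exchange_big /=; apply: eq_bigr => j _; apply: maj_marginalE. Qed.

Definition perm_psum (sg : {ffun 'I_N -> 'S_N}) (k : 'I_N) V : R :=
  \sum_mu \sum_(j < N | (j < k.+1)%N) joint_prob rho U V (sg mu j) mu.

Lemma perm_psum_le sg k V : perm_psum sg k V <= psum (maj_marginal rho U V) k.+1.
Proof.
rewrite psum_maj_marginal; apply: ler_sum => mu _.
have [p p_sort] := desc_sort_perm (joint_col V mu).
have -> : \sum_(j < N | (j < k.+1)%N) joint_prob rho U V (sg mu j) mu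
    = \sum_(j < N | (j < k.+1)%N) desc_sort (joint_col V mu) 0 ((p^-1)%g (sg mu j)).
  by apply: eq_bigr => j _; rewrite p_sort permKV mxE.
apply: sum_inj_le_psum; first by move=> i j; apply: desc_sort_desc.
by move=> x y /= /perm_inj /perm_inj.
Qed.

Lemma perm_psum_attained (k : 'I_N) V :
  exists sg, psum (maj_marginal rho U V) k.+1 = perm_psum sg k V.
Proof.
have [p p_sort] := fin_all_exists (fun mu => desc_sort_perm (joint_col V mu)).
exists [ffun mu => p mu]; rewrite psum_maj_marginal; apply: eq_bigr => mu _.
by apply: eq_bigr => j _; rewrite p_sort ffunE mxE.
Qed.

End Marginal.

Section ComplexContinuity.
Variables (R : realType) (n : nat).
Local Notation C := R[i].
Local Notation X := 'rV[R]_n.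
Local Open Scope classical_set_scope.

Lemma continuous_sumr (I : Type) (r : seq I) (P : pred I) (F : I -> X -> R) :
  (forall i, continuous (F i)) -> continuous (fun x => \sum_(i <- r | P i) F i x).
Proof.
by move=> F_cont; apply: continuous_big => [|i _]; [apply: add_continuous | apply: F_cont].
Qed.

(* [R[i]] carries no topology here: continuity of a complex-valued map means
   continuity of its real and imaginary parts. *)
Definition continuousC (f : X -> C) :=
  continuous (fun x => complex.Re (f x)) /\ continuous (fun x => complex.Im (f x)).

Lemma continuousC_cst c : continuousC (fun=> c).
Proof. by split; apply: cst_continuous. Qed.

Lemma continuousC_mul f g :
  continuousC f -> continuousC g -> continuousC (fun x => f x * g x).
Proof.
case=> Ref_cont Imf_cont [Reg_cont Img_cont]; split => x.
- have ReRe : {for x, continuous (fun x => complex.Re (f x) * complex.Re (g x))}.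
    by apply: continuousM; [apply: Ref_cont | apply: Reg_cont].
  have ImIm : {for x, continuous (fun x => - (complex.Im (f x) * complex.Im (g x)))}.
    by apply/continuousN/continuousM; [apply: Imf_cont | apply: Img_cont].
  rewrite (_ : (fun x => _) = (fun x => complex.Re (f x) * complex.Re (g x)
      - complex.Im (f x) * complex.Im (g x))); last first.
    by apply: funext => y; case: (f y); case: (g y).
  exact: continuousD ReRe ImIm.
- have ReIm : {for x, continuous (fun x => complex.Re (f x) * complex.Im (g x))}.
    by apply: continuousM; [apply: Ref_cont | apply: Img_cont].
  have ImRe : {for x, continuous (fun x => complex.Im (f x) * complex.Re (g x))}.
    by apply: continuousM; [apply: Imf_cont | apply: Reg_cont].
  rewrite (_ : (fun x => _) = (fun x => complex.Re (f x) * complex.Im (g x)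
      + complex.Im (f x) * complex.Re (g x))); last first.
    by apply: funext => y; case: (f y) => a b; case: (g y) => c d /=; rewrite addrC.
  exact: continuousD ReIm ImRe.
Qed.

Lemma continuousC_conj f : continuousC f -> continuousC (fun x => Num.conj (f x)).
Proof.
case=> Ref_cont Imf_cont; split.
- rewrite (_ : (fun x => _) = (fun x => complex.Re (f x))) //.
  by apply: funext => y; case: (f y).
- rewrite (_ : (fun x => _) = (fun x => - complex.Im (f x))); last first.
    by apply: funext => y; case: (f y).
  by move=> x; apply: continuousN; apply: Imf_cont.
Qed.

Lemma continuousC_sum (I : Type) (r : seq I) (P : pred I) (F : I -> X -> C) :
  (forall i, continuousC (F i)) -> continuousC (fun x => \sum_(i <- r | P i) F i x).
Proof.
move=> F_cont; split.
- under eq_fun do rewrite Re_sum; apply: continuous_sumr => i; exact: (F_cont i).1.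
- under eq_fun do rewrite Im_sum; apply: continuous_sumr => i; exact: (F_cont i).2.
Qed.

Lemma closed_continuousC_eq f c : continuousC f -> closed [set x | f x = c].
Proof.
case=> Ref_cont Imf_cont.
rewrite (_ : [set x | f x = c] = (fun x => complex.Re (f x)) @^-1` [set complex.Re c]
    `&` (fun x => complex.Im (f x)) @^-1` [set complex.Im c]); last first.
  apply/seteqP; split => x /=; first by move->.
  by case: (f x) c => a b [a' b'] /= [-> ->].
apply: closedI; apply: preimage_closed; try exact: closed_eq.
- by move=> x _; apply: Ref_cont.
- by move=> x _; apply: Imf_cont.
Qed.

Definition continuousM p q (F : X -> 'M[C]_(p, q)) :=
  forall a b, continuousC (fun x => F x a b).

Lemma continuousM_cst p q (A : 'M[C]_(p, q)) : continuousM (fun=> A).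
Proof. by move=> a b; apply: continuousC_cst. Qed.

Lemma continuousM_mul p q r (F : X -> 'M[C]_(p, q)) (G : X -> 'M[C]_(q, r)) :
  continuousM F -> continuousM G -> continuousM (fun x => F x *m G x).
Proof.
move=> F_cont G_cont a b; under eq_fun do rewrite mxE.
by apply: continuousC_sum => j; apply: continuousC_mul.
Qed.

Lemma continuousM_adj p q (F : X -> 'M[C]_(p, q)) :
  continuousM F -> continuousM (fun x => adjmx (F x)).
Proof. by move=> F_cont a b; under eq_fun do rewrite !mxE; apply: continuousC_conj. Qed.

Lemma continuousM_tens p q p' q' (F : X -> 'M[C]_(p, q)) (G : X -> 'M[C]_(p', q')) :
  continuousM F -> continuousM G -> continuousM (fun x => F x *t G x).
Proof. by move=> F_cont G_cont a b; under eq_fun do rewrite !mxE; apply: continuousC_mul. Qed.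

Lemma continuousM_col p q (F : X -> 'M[C]_(p, q)) j :
  continuousM F -> continuousM (fun x => col j (F x)).
Proof. by move=> F_cont a b; under eq_fun do rewrite !mxE; apply: F_cont. Qed.

End ComplexContinuity.

Section OptimalMeasurement.
Variables (R : realType) (N : nat).
Local Notation C := R[i].
Local Notation n := (N * N + N * N)%N.
Local Open Scope classical_set_scope.

Definition mx_of_coords (x : 'rV[R]_n) : 'M[C]_N :=
  \matrix_(a, b) Complex (x 0 (lshift (N * N) (mxvec_index a b)))
                         (x 0 (rshift (N * N) (mxvec_index a b))).

Definition coords_of_mx (V : 'M[C]_N) : 'rV[R]_n :=
  row_mx (mxvec (map_mx (@complex.Re R) V)) (mxvec (map_mx (@complex.Im R) V)).

Lemma coords_of_mxK : cancel coords_of_mx mx_of_coords.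
Proof.
move=> V; apply/matrixP => a b.
by rewrite mxE /coords_of_mx row_mxEl row_mxEr !mxvecE !mxE; case: (V a b).
Qed.

Lemma continuousM_mx_of_coords : continuousM mx_of_coords.
Proof.
move=> a b; split; under eq_fun do rewrite mxE /=; exact: coord_continuous.
Qed.

Lemma unitary_entry_bound (V : 'M[C]_N) a b : unitary_mx V ->
  complex.Re (V a b) \in `[-1, 1]%R /\ complex.Im (V a b) \in `[-1, 1]%R.
Proof.
move=> V_unitary.
have : complex.Re ((adjmx V *m V) b b) = 1 by rewrite V_unitary mxE eqxx.
rewrite mxE Re_sum (bigD1 a) //=.
under eq_bigr do rewrite !mxE.
rewrite !mxE; case: (V a b) => x y /= col_norm.
have : x ^+ 2 + y ^+ 2 <= 1.
  rewrite -col_norm !expr2 mulNr opprK lerDl; apply: sumr_ge0 => c _.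
  by case: (V c b) => u v /=; rewrite mulNr opprK -!expr2 addr_ge0 ?sqr_ge0.
by rewrite !expr2 => norm_le1; split; rewrite in_itv /=; apply/andP; split; nra.
Qed.

Definition unitary_coords : set 'rV[R]_n := [set x | unitary_mx (mx_of_coords x)].

Lemma closed_unitary_coords : closed unitary_coords.
Proof.
rewrite (_ : unitary_coords = \bigcap_(ab in [set: 'I_N * 'I_N])
    [set x | (adjmx (mx_of_coords x) *m mx_of_coords x) ab.1 ab.2 = 1%:M ab.1 ab.2]).
  apply: closed_bigI => ab _; apply: closed_continuousC_eq.
  by apply: continuousM_mul; [apply: continuousM_adj |]; apply: continuousM_mx_of_coords.
apply/seteqP; split => x; first by move=> x_unitary ab _ /=; rewrite x_unitary.
by move=> x_unitary; apply/matrixP => a b; apply: (x_unitary (a, b)).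
Qed.

Lemma compact_unitary_coords : compact unitary_coords.
Proof.
have box_compact := @rV_compact _ n (fun _ => `[-1 : R, 1]%classic)
  (fun _ => @segment_compact R (-1) 1).
apply: (subclosed_compact closed_unitary_coords box_compact) => x x_unitary i.
rewrite -(splitK i); case: (split i) => j /=; case: (mxvec_indexP j) => a b.
- by have [+ _] := unitary_entry_bound a b x_unitary; rewrite mxE.
- by have [_ +] := unitary_entry_bound a b x_unitary; rewrite mxE.
Qed.

Lemma continuous_joint_prob (rho : 'M[C]_(N * N)) (U : 'M[C]_N) i mu :
  continuous (fun x => joint_prob rho U (mx_of_coords x) i mu).
Proof.
have w_cont : continuousM (fun x => col i U *t col mu (mx_of_coords x)).
  apply: continuousM_tens; first exact: continuousM_cst.
  exact/continuousM_col/continuousM_mx_of_coords.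
have quad_cont := continuousM_mul (continuousM_adj w_cont) (continuousM_cst n rho).
by have [] := continuousM_mul quad_cont w_cont 0 0.
Qed.

Lemma exists_max_perm_psum (rho : 'M[C]_(N * N)) (U : 'M[C]_N) sg k :
  exists2 V, unitary_mx V &
  forall V', unitary_mx V' -> perm_psum rho U sg k V' <= perm_psum rho U sg k V.
Proof.
have nonempty : unitary_coords !=set0.
  by exists (coords_of_mx 1%:M); rewrite /unitary_coords /= coords_of_mxK; apply: unitary1.
have perm_psum_cont : continuous (fun x => perm_psum rho U sg k (mx_of_coords x)).
  by apply: continuous_sumr => mu; apply: continuous_sumr => j; apply: continuous_joint_prob.
have [x x_unitary x_max] := EVT_max_rV nonempty compact_unitary_coords
  (continuous_subspaceT perm_psum_cont).
exists (mx_of_coords x); first exact: set_mem x_unitary.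
move=> V V_unitary; rewrite -(coords_of_mxK V); apply: x_max; apply: mem_set.
by rewrite /unitary_coords /= coords_of_mxK.
Qed.

Lemma exists_optimal_measurement (rho : 'M[C]_(N * N)) (U : 'M[C]_N) (k : 'I_N) :
  exists V, unitary_mx V /\ forall V', unitary_mx V' ->
    psum (maj_marginal rho U V') k.+1 <= psum (maj_marginal rho U V) k.+1.
Proof.
have [Vs Vs_unitary Vs_max] := fin_all_exists2 (fun sg => exists_max_perm_psum rho U sg k).
pose best sg := perm_psum rho U sg k (Vs sg).
have [sg0 _ sg0_max] := @arg_maxP _ _ _ [ffun=> 1%g] predT best isT.
exists (Vs sg0); split => // V V_unitary.
have [sg ->] := perm_psum_attained rho U k V.
apply: le_trans (perm_psum_le rho U sg0 k (Vs sg0)).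
exact: le_trans (Vs_max sg V V_unitary) (sg0_max sg isT).
Qed.

End OptimalMeasurement.

Section OptimalLub.
Variables (R : realType) (N : nat).
Variables (rho : 'M[R[i]]_(N * N)) (U : 'M[R[i]]_N).
Hypotheses (rho_dens : density_op rho) (U_unitary : unitary_mx U).

Let marginals a := exists V, unitary_mx V /\ a = maj_marginal rho U V.

Let marginals_prob a : marginals a -> prob_vec a.
Proof. by case=> V [V_unitary ->]; apply/desc_prob_prob/maj_marginal_desc_prob. Qed.

Lemma maj_lub_optimal_marginals (Vk : 'I_N -> 'M[R[i]]_N) s :
  (forall k : 'I_N, unitary_mx (Vk k) /\ forall V, unitary_mx V ->
     psum (maj_marginal rho U V) k.+1 <= psum (maj_marginal rho U (Vk k)) k.+1) ->
  maj_lub marginals s -> maj_lub (fun c => exists k, c = maj_marginal rho U (Vk k)) s.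
Proof.
move=> Vk_opt; apply: maj_lub_sub => [c [k ->] | t t_dp t_ub a a_marg].
  by exists (Vk k); have [] := Vk_opt k.
apply: majorized_prob_psumS (marginals_prob a_marg) (desc_prob_prob t_dp) _ => k lt_kN.
have [V [V_unitary ->]] := a_marg.
have [_ Vk_max] := Vk_opt (Ordinal lt_kN).
apply: le_trans (Vk_max V V_unitary) _.
by have [le_t _] := t_ub _ (ex_intro _ (Ordinal lt_kN) erefl); apply: le_t.
Qed.

End OptimalLub.

Theorem proposition1 (R : realType) (N : nat) (N_gt0 : (0 < N)%N)
    (rho : 'M[R[i]]_(N * N)) (Hrho : density_op rho)
    (U : 'M[R[i]]_N) (HU : unitary_mx U) :
  let P := fun a => exists V : 'M[R[i]]_N, unitary_mx V /\ a = maj_marginal rho U V in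
  (exists! s : 'rV[R]_N, maj_lub P s)
  /\ (forall s, maj_lub P s ->
        forall V : 'M[R[i]]_N, unitary_mx V -> majorized (maj_marginal rho U V) s)
  /\ (forall k : 'I_N, exists V : 'M[R[i]]_N, unitary_mx V /\
        forall V' : 'M[R[i]]_N, unitary_mx V' ->
          psum (maj_marginal rho U V') k.+1 <= psum (maj_marginal rho U V) k.+1)
  /\ (forall Vk : 'I_N -> 'M[R[i]]_N,
        (forall k : 'I_N, unitary_mx (Vk k) /\
           forall V' : 'M[R[i]]_N, unitary_mx V' ->
             psum (maj_marginal rho U V') k.+1 <= psum (maj_marginal rho U (Vk k)) k.+1) ->
        forall s, maj_lub P s ->
          s = foldl (fun acc k => maj_join acc (maj_marginal rho U (Vk k)))
                    (maj_marginal rho U (Vk (Ordinal N_gt0)))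
                    (behead (enum 'I_N))).
Proof.
move=> P.
have P_prob a : P a -> prob_vec a.
  by case=> V [V_unitary ->]; apply/desc_prob_prob/maj_marginal_desc_prob.
have [s s_lub] := maj_lub_exists N_gt0 P_prob.
split; first by exists s; split => // s'; apply: maj_lub_unique.
split; first by move=> s' [_ s'_ub _] V V_unitary; apply: s'_ub; exists V.
split; first exact: exists_optimal_measurement.
move=> Vk Vk_opt s' s'_lub.
have opt_dp k : desc_prob (maj_marginal rho U (Vk k)).
  by apply: maj_marginal_desc_prob; have [] := Vk_opt k.
apply: maj_lub_unique (maj_lub_foldl_enum N_gt0 opt_dp).
exact: maj_lub_optimal_marginals.
Qed.
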